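(* Let $n\geq 3$ and let $A_n$ be the graph with vertices $\{1,\dots,n\}$ and edges $\{i,i+1\}$ for $1\leq i\leq n-1$. Then $$\#\mathcal{P}_d(\mathcal{E}_{A_n})=\begin{cases}2n-2d & \text{if } 3\leq d\leq n-1,\\ 0 & \text{if } d\geq n,\end{cases}$$ and $\mathcal{P}_2(\mathcal{E}_{A_n})$ is a union of $2n-6$ copies of $\mathbb{P}^1$ if $n>3$, and consists of two points if $n=3$.
   Context: Work over an algebraically closed field $k$. The Fomin–Kirillov algebra $\mathcal{E}_n$ is the graded $k$-algebra generated by degree-$1$ elements $x_{ij}$, $1\leq i<j\leq n$, subject to: $x_{ij}^2=0$; $x_{ij}x_{kl}=x_{kl}x_{ij}$ whenever $\{i,j\}\cap\{k,l\}=\emptyset$; $x_{ij}x_{jk}-x_{jk}x_{ik}-x_{ik}x_{ij}=0$ and $x_{jk}x_{ij}-x_{ik}x_{jk}-x_{ij}x_{ik}=0$ for $i<j<k$. For a graph $G$ on $\{1,\dots,n\}$, $\mathcal{E}_G$ is the subalgebra of $\mathcal{E}_n$ generated by the $x_{ij}$ with $\{i,j\}$ an edge of $G$. For a connected graded algebra $A=k\langle x_1,\dots,x_r\rangle/I$ generated in degree $1$, a degree-$d$ truncated point module is a graded cyclic module $M=ke_0\oplus\cdots\oplus ke_d$ generated by $e_0$; writing $x_i e_j=\lambda_i^j e_{j+1}$, such modules correspond bijectively to points $([\lambda_1^0:\cdots:\lambda_r^0],\dots,[\lambda_1^{d-1}:\cdots:\lambda_r^{d-1}])\in(\mathbb{P}^{r-1})^{\times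 d}$ satisfying the multilinearized relations (each homogeneous relation $\sum_I c_I x_{i_1}\cdots x_{i_t}$ yields $\sum_I c_I\lambda_{i_1}^{s+t-1}\cdots\lambda_{i_t}^{s}=0$ for $0\leq s\leq d-t$). $\mathcal{P}_d(A)$ denotes this subset of $(\mathbb{P}^{r-1})^{\times d}$; here $A=\mathcal{E}_{A_n}$ with generators $x_{i,i+1}$, $1\leq i\leq n-1$. *)

From HB Require Import structures.
From mathcomp Require Import all_boot all_algebra.

Set Implicit Arguments.
Unset Strict Implicit.
Unset Printing Implicit Defensive.

Import GRing.Theory.
Local Open Scope ring_scope.

Section NonCommPoly.
Variable k : fieldType.

(** Noncommutative polynomials over an alphabet [A]: formal finite
    k-linear combinations of words, as lists of (coefficient, word).
    Two such lists denote the same element iff they have the same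
    coefficient function [ncoef]. *)
Section Alphabet.
Variable A : eqType.

Definition ncpoly := seq (k * seq A).

Definition ncoef (p : ncpoly) (w : seq A) : k :=
  \sum_(cw <- p | cw.2 == w) cw.1.

Definition nceq (p q : ncpoly) : Prop := forall w, ncoef p w = ncoef q w.

Definition ncone : ncpoly := [:: (1, [::])].

Definition ncmul (p q : ncpoly) : ncpoly :=
  [seq (cw.1 * dv.1, cw.2 ++ dv.2) | cw <- p, dv <- q].

Definition ncopp (p : ncpoly) : ncpoly := [seq (- cw.1, cw.2) | cw <- p].

Definition ncsub (p q : ncpoly) : ncpoly := p ++ ncopp q.

Definition in_ideal (R : ncpoly -> Prop) (f : ncpoly) : Prop :=
  exists L : seq (ncpoly * ncpoly * ncpoly),
    (forall x, x \in L -> R x.1.2) /\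
    nceq f (flatten [seq ncmul (ncmul x.1.1 x.1.2) x.2 | x <- L]).

Definition homog (t : nat) (f : ncpoly) : Prop :=
  forall cw, cw \in f -> size cw.2 = t.

End Alphabet.

(** ---- The Fomin--Kirillov algebra E_n ----
    Vertices are 0,...,n-1 (the paper's 1,...,n shifted by one).
    Generators x_{ij}, i < j < n. *)
Definition FKgen (n : nat) := {p : nat * nat | (p.1 < p.2) && (p.2 < n)}%N.

(** the generator x_{ij} as a polynomial (zero if (i,j) is not a valid pair) *)
Definition xg (n i j : nat) : ncpoly (FKgen n) :=
  if @insub _ _ (FKgen n) (i, j) is Some g then [:: (1, [:: g])] else [::].

Definition FKrel (n : nat) (r : ncpoly (FKgen n)) : Prop :=
  (exists i j, (i < j < n)%N /\ r = ncmul (xg n i j) (xg n i j))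
  \/ (exists i j a b, (i < j < n)%N /\ (a < b < n)%N /\
        [&& i != a, i != b, j != a & j != b]%N /\
        r = ncsub (ncmul (xg n i j) (xg n a b)) (ncmul (xg n a b) (xg n i j)))
  \/ (exists i j l, (i < j < l)%N /\ (l < n)%N /\
        r = ncsub (ncsub (ncmul (xg n i j) (xg n j l)) (ncmul (xg n j l) (xg n i l)))
                  (ncmul (xg n i l) (xg n i j)))
  \/ (exists i j l, (i < j < l)%N /\ (l < n)%N /\
        r = ncsub (ncsub (ncmul (xg n j l) (xg n i j)) (ncmul (xg n i l) (xg n j l)))
                  (ncmul (xg n i j) (xg n i l))).

(** ---- E_{A_n} = subalgebra generated by y_i := x_{i,i+1}, i < n-1 ----
    presented as k<y_0,...,y_{n-2}> / I with I the kernel of y_i |-> x_{i,i+1}. *)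
Definition An_word (n : nat) (w : seq 'I_(n.-1)) : ncpoly (FKgen n) :=
  foldr (fun (a : 'I_(n.-1)) acc => ncmul (xg n a a.+1) acc) (ncone _) w.

Definition An_subst (n : nat) (f : ncpoly 'I_(n.-1)) : ncpoly (FKgen n) :=
  flatten [seq ncmul [:: (cw.1, [::])] (@An_word n cw.2) | cw <- f].

Definition An_rel (n : nat) (f : ncpoly 'I_(n.-1)) : Prop :=
  in_ideal (@FKrel n) (@An_subst n f).

(** ---- Truncated point modules ----
    A tuple of d points of P^{r-1} is represented by lam : nat -> 'I_r -> k,
    lam j being a representative of the j-th point (j < d). *)
Definition pt (r : nat) := nat -> 'I_r -> k.

Definition nonzero_pt (r d : nat) (lam : pt r) : Prop :=
  forall j, (j < d)%N -> exists i, lam j i != 0.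

Definition pequiv (r d : nat) (lam mu : pt r) : Prop :=
  forall j, (j < d)%N -> exists c : k, c != 0 /\ forall i, mu j i = c * lam j i.

(** evaluation of the multilinearized word: for w = i_1 ... i_t,
    lam^{s+t-1}_{i_1} * ... * lam^{s}_{i_t} *)
Fixpoint evalw (r : nat) (lam : pt r) (s : nat) (w : seq 'I_r) : k :=
  if w is a :: w' then lam (s + size w')%N a * evalw lam s w' else 1.

Definition Pd (r : nat) (I : ncpoly 'I_r -> Prop) (d : nat) (lam : pt r) : Prop :=
  nonzero_pt d lam /\
  forall (t s : nat) (f : ncpoly 'I_r), homog t f -> I f -> (s + t <= d)%N ->
    \sum_(cw <- f) cw.1 * evalw lam s cw.2 = 0.

Definition has_npoints (r d : nat) (P : pt r -> Prop) (N : nat) : Prop :=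
  exists L : 'I_N -> pt r,
    (forall a, P (L a)) /\
    (forall a b, pequiv d (L a) (L b) -> a = b) /\
    (forall lam, P lam -> exists a, pequiv d (L a) lam).

(** Copies of P^1 in (P^{r-1})^d: images of [s:t] |-> ( [s u_j + t v_j] )_j,
    where in the factors with flag c j = true the map is constant [u_j],
    and otherwise u_j, v_j are linearly independent (a linear embedding);
    at least one factor is non-constant. *)
Definition lin_indep (r : nat) (u v : 'I_r -> k) : Prop :=
  forall a b : k, (forall i, a * u i + b * v i = 0) -> a = 0 /\ b = 0.

Definition good_line (r d : nat) (u v : pt r) (c : nat -> bool) : Prop :=
  (forall j, (j < d)%N -> if c j then exists i, u j i != 0 else lin_indep (u j) (v j))
  /\ exists j, (j < d)%N /\ c j = false.

Definition on_line (r d : nat) (u v : pt r) (c : nat -> bool) (lam : pt r) : Prop :=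
  exists s t : k, (s != 0 \/ t != 0) /\
    pequiv d (fun j i => if c j then u j i else s * u j i + t * v j i) lam.

Definition union_of_P1s (r d : nat) (P : pt r -> Prop) (m : nat) : Prop :=
  exists (U V : 'I_m -> pt r) (C : 'I_m -> nat -> bool),
    (forall a, good_line d (U a) (V a) (C a)) /\
    (forall a b, (forall lam, on_line d (U a) (V a) (C a) lam <->
                              on_line d (U b) (V b) (C b) lam) -> a = b) /\
    (forall lam, P lam <-> exists a, on_line d (U a) (V a) (C a) lam).

End NonCommPoly.

Definition Pd_An (k : fieldType) (n d : nat) : pt k n.-1 -> Prop :=
  Pd (@An_rel k n) d.
Arguments Pd_An k n d : clear implicits.

(* A point of P_d(E_{A_n}) is a tuple (λ^0, ..., λ^{d-1}) of points of P^{n-2}, λ^j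
   recording how the generators y_a = x_{a,a+1} act on e_j.  The relations y_a^2 = 0,
   y_a y_b = y_b y_a for |a - b| >= 2 and y_a y_{a+1} y_a = y_{a+1} y_a y_{a+1}, which hold
   in E_{A_n}, force every vertex in the support of λ^j to be adjacent to every vertex in
   the support of λ^{j+1}.  For d >= 3 the braid relation then forces all supports to be
   single vertices moving in one direction: λ is an ascending or a descending chain of
   coordinate points, n - d of each kind, and there are none when d >= n.  For d = 2 the
   adjacency condition alone cuts out 2n - 6 lines.
   Conversely, a tuple λ defines a linear functional on words, and λ lies in P_d as soon
   as this functional vanishes on the two-sided ideal generated by the Fomin-Kirillov
   relations.  For chains the functional is a matrix coefficient of a monomial
   representation of E_n on finite sets of vertices; in degree 2 it is written down
   explicitly. *)

From mathcomp Require Import all_boot all_algebra finmap.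
From mathcomp Require Import ring zify.

Set Implicit Arguments.
Unset Strict Implicit.
Unset Printing Implicit Defensive.

Import GRing.Theory.
Local Open Scope ring_scope.

Section Pairing.
Variables (k : fieldType) (A : eqType).

Definition ncpair (psi : seq A -> k) (p : ncpoly k A) : k :=
  \sum_(cw <- p) cw.1 * psi cw.2.

Lemma ncpair_ncoef psi (p : ncpoly k A) s : uniq s -> {subset map snd p <= s} ->
  ncpair psi p = \sum_(w <- s) ncoef p w * psi w.
Proof.
move=> s_uniq p_s; rewrite /ncpair /ncoef.
under [RHS]eq_bigr do rewrite big_distrl big_mkcond /=.
rewrite exchange_big /=; apply: eq_big_seq => cw cw_p.
have cw_s : cw.2 \in s by apply/p_s/map_f.
rewrite (big_rem _ cw_s) /= eqxx big1_seq ?addr0 // => w /andP[_ w_s].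
by case: eqP w_s => // <-; rewrite mem_rem_uniqF.
Qed.

Lemma ncpair_nceq psi (p q : ncpoly k A) : nceq p q -> ncpair psi p = ncpair psi q.
Proof.
move=> pq; pose s := undup (map snd (p ++ q)).
rewrite !(@ncpair_ncoef _ _ s) ?undup_uniq //.
- by apply: eq_bigr => w _; rewrite pq.
all: by move=> w wr; rewrite mem_undup map_cat mem_cat wr ?orbT.
Qed.

Lemma big_ncmul (F : k * seq A -> k) (p q : ncpoly k A) :
  \sum_(x <- ncmul p q) F x = \sum_(a <- p) \sum_(b <- q) F (a.1 * b.1, a.2 ++ b.2).
Proof.
elim: p => [|a p IHp]; first by rewrite /ncmul !big_nil.
by rewrite big_cons -IHp /ncmul /= big_cat big_map.
Qed.

Lemma ncoefE (p : ncpoly k A) w : ncoef p w = \sum_(cw <- p) cw.1 * (cw.2 == w)%:R.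
Proof. by rewrite /ncoef big_mkcond; apply: eq_bigr => cw _; case: eqP; rewrite ?mulr1 ?mulr0. Qed.

Definition annihilates (R : ncpoly k A -> Prop) (psi : seq A -> k) :=
  forall r, R r -> forall U V, \sum_(cr <- r) cr.1 * psi (U ++ cr.2 ++ V) = 0.

Lemma ncpair_ideal R psi f : annihilates R psi -> in_ideal R f -> ncpair psi f = 0.
Proof.
move=> psiR [L [LR fL]]; rewrite (ncpair_nceq psi fL) /ncpair big_flatten big_map /=.
rewrite big1_seq // => -[[u r] v] /andP[_ /LR /= Rr].
rewrite !big_ncmul big1_seq // => cu _; rewrite exchange_big big1_seq //= => cv _.
rewrite (eq_bigr (fun cr => cu.1 * (cr.1 * psi (cu.2 ++ cr.2 ++ cv.2)) * cv.1)).
  by rewrite -big_distrl -big_distrr /= psiR // mulr0 mul0r.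
by move=> cr _; rewrite catA; ring.
Qed.

End Pairing.

Lemma xgE (k : fieldType) (n i j : nat) : (i < j < n)%N ->
  exists g : FKgen n, val g = (i, j) /\ xg k n i j = [:: (1, [:: g])].
Proof. by move=> ijn; rewrite /xg; case: insubP => [g _ <-|]; [exists g | rewrite ijn]. Qed.

Section AnGenerators.
Variables (k : fieldType) (n : nat).

Lemma ygen_subproof (a : 'I_n.-1) : ((val a < (val a).+1) && ((val a).+1 < n))%N.
Proof. by have := ltn_ord a; rewrite ltnSn /=; lia. Qed.

Definition ygen (a : 'I_n.-1) : FKgen n := Sub (val a, (val a).+1) (ygen_subproof a).

Lemma xg_ygen (a : 'I_n.-1) : xg k n a (val a).+1 = [:: (1, [:: ygen a])].
Proof.
have [g [gv ->]] := xgE k (ygen_subproof a).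
by congr [:: (_, [:: _])]; apply: val_inj.
Qed.

Lemma An_word_ygen (w : seq 'I_n.-1) : An_word k w = [:: (1, map ygen w)].
Proof. by elim: w => [|a w IHw] //=; rewrite IHw xg_ygen /ncmul /= mulr1. Qed.

Lemma ncpair_An_subst psi (f : ncpoly k 'I_n.-1) :
  ncpair psi (An_subst f) = ncpair (psi \o map ygen) f.
Proof.
rewrite /An_subst /ncpair big_flatten big_map; apply: eq_bigr => cw _.
by rewrite An_word_ygen /ncmul /= big_seq1 mulr1.
Qed.

Lemma Pd_of_annihilators d (lam : pt k n.-1) : nonzero_pt d lam ->
  (forall s t, (s + t <= d)%N -> exists psi : seq (FKgen n) -> k,
      annihilates (@FKrel k n) psi /\
      forall w, size w = t -> psi (map ygen w) = evalw lam s w) ->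
  Pd (@An_rel k n) d lam.
Proof.
move=> lam_nz psi_ex; split=> // t s f f_hom f_rel st_d.
have [psi [psiR psi_lam]] := psi_ex s t st_d.
rewrite -[RHS](ncpair_ideal psiR f_rel) ncpair_An_subst.
by apply: eq_big_seq => cw /f_hom cw_t; rewrite /= psi_lam.
Qed.

End AnGenerators.

Arguments ygen {n}.

Section FKRelations.
Variables (k : fieldType) (n : nat).

Variant FKrel_spec (r : ncpoly k (FKgen n)) : Prop :=
| FKrelSq g of r = [:: (1, [:: g; g])]
| FKrelComm g h i j a b of val g = (i, j) & val h = (a, b) & (i < j)%N & (a < b)%N
    & [&& i != a, i != b, j != a & j != b] & r = [:: (1, [:: g; h]); (-1, [:: h; g])]
| FKrelTri g1 g2 g3 i j l of val g1 = (i, j) & val g2 = (j, l) & val g3 = (i, l)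
    & (i < j < l)%N & r = [:: (1, [:: g1; g2]); (-1, [:: g2; g3]); (-1, [:: g3; g1])]
| FKrelTriRev g1 g2 g3 i j l of val g1 = (i, j) & val g2 = (j, l) & val g3 = (i, l)
    & (i < j < l)%N & r = [:: (1, [:: g2; g1]); (-1, [:: g3; g2]); (-1, [:: g1; g3])].

Lemma FKrelP r : FKrel r -> FKrel_spec r.
Proof.
move=> [[i [j [ijn ->]]] | [[i [j [a [b [ijn [abn [disj ->]]]]]]] |
         [] [i [j [l [ijl [ln ->]]]]]]].
- by have [g [_ ->]] := xgE k ijn; apply: (FKrelSq (g := g)); rewrite /ncmul /= mulr1.
- have [g [gij ->]] := xgE k ijn; have [h [hab ->]] := xgE k abn.
  case/andP: ijn => ij _; case/andP: abn => ab _.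
  by apply: (FKrelComm gij hab ij ab disj); rewrite /ncsub /ncopp /ncmul /= mulr1.
all: have [g1 [v1 ->]] : exists g, val g = (i, j) /\ xg k n i j = [:: (1, [:: g])]
  by apply: xgE; lia.
all: have [g2 [v2 ->]] : exists g, val g = (j, l) /\ xg k n j l = [:: (1, [:: g])]
  by apply: xgE; lia.
all: have [g3 [v3 ->]] : exists g, val g = (i, l) /\ xg k n i l = [:: (1, [:: g])]
  by apply: xgE; lia.
- by apply: (FKrelTri v1 v2 v3 ijl); rewrite /ncsub /ncopp /ncmul /= mulr1.
- by apply: (FKrelTriRev v1 v2 v3 ijl); rewrite /ncsub /ncopp /ncmul /= mulr1.
Qed.

Lemma FKrel_size (r : ncpoly k (FKgen n)) :
  FKrel r -> forall cr, cr \in r -> size cr.2 = 2%N.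
Proof.
case/FKrelP=> [g|g h ? ? ? ? _ _ _ _ _|g1 g2 g3 ? ? ? _ _ _ _|g1 g2 g3 ? ? ? _ _ _ _] -> cr.
- by rewrite inE => /eqP ->.
- by rewrite !inE => /orP[] /eqP ->.
all: by rewrite !inE => /or3P[] /eqP ->.
Qed.

End FKRelations.

Section AnRelations.
Variables (k : fieldType) (n : nat).

Lemma An_rel_sq (a : 'I_n.-1) : An_rel [:: (1 : k, [:: a; a])].
Proof.
exists [:: (ncone _ _, ncmul (xg k n a (val a).+1) (xg k n a (val a).+1), ncone _ _)].
split=> [x|w].
  by rewrite inE => /eqP -> /=; left; exists a, (val a).+1; split=> //; exact: ygen_subproof.
by rewrite /An_subst /= xg_ygen /ncmul /ncone /= !ncoefE !big_cons !big_nil /=; ring.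
Qed.

Lemma An_rel_comm (a b : 'I_n.-1) : ((val a).+2 <= val b)%N ->
  An_rel [:: (1 : k, [:: a; b]); (-1, [:: b; a])].
Proof.
move=> ab; have bn : ((val b).+1 < n)%N.
  by have : (val b < n.-1)%N := ltn_ord b; lia.
pose x := xg k n a (val a).+1; pose y := xg k n b (val b).+1.
exists [:: (ncone _ _, ncsub (ncmul x y) (ncmul y x), ncone _ _)].
split=> [r|w]; rewrite /x /y.
  rewrite inE => /eqP -> /=; right; left.
  exists (val a), (val a).+1, (val b), (val b).+1.
  split; [lia | split; [lia | split=> //]].
  by apply/and4P; split; apply/eqP; lia.
rewrite /An_subst /= !xg_ygen /ncsub /ncopp /ncmul /ncone /= !ncoefE !big_cons !big_nil /=.
ring.
Qed.

Lemma An_rel_braid (a b : 'I_n.-1) : val b = (val a).+1 ->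
  An_rel [:: (1 : k, [:: a; b; a]); (-1, [:: b; a; b])].
Proof.
move=> ba; have an : ((val a).+2 < n)%N.
  by have : (val b < n.-1)%N := ltn_ord b; rewrite ba; lia.
pose x := xg k n a (val a).+1; pose y := xg k n (val a).+1 (val a).+2.
pose z := xg k n a (val a).+2.
pose tri := ncsub (ncsub (ncmul x y) (ncmul y z)) (ncmul z x).
have tri_rel : FKrel tri.
  by right; right; left; exists (val a), (val a).+1, (val a).+2; split=> //; lia.
(* y_a y_b y_a - y_b y_a y_b = z y_a^2 - y_b^2 z + tri y_a - y_b tri, with z = x_{a,a+2} *)
exists [:: (z, ncmul x x, ncone _ _); ([:: (-1, [::])], ncmul y y, z);
           (ncone _ _, tri, x); (ncopp y, tri, ncone _ _)].
split=> [r|w].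
  rewrite !inE => /or4P[] /eqP -> //=; left.
    by exists (val a), (val a).+1; split=> //; lia.
  by exists (val a).+1, (val a).+2; split=> //; lia.
rewrite /An_subst /tri /x /y /z /= ba.
have [g1 [_ ->]] : exists g, val g = (val a, (val a).+1) /\
    xg k n a (val a).+1 = [:: (1, [:: g])].
  by apply: xgE; lia.
have [g2 [_ ->]] : exists g, val g = ((val a).+1, (val a).+2) /\
    xg k n (val a).+1 (val a).+2 = [:: (1, [:: g])].
  by apply: xgE; lia.
have [g3 [_ ->]] : exists g, val g = (val a, (val a).+2) /\
    xg k n a (val a).+2 = [:: (1, [:: g])].
  by apply: xgE; lia.
rewrite /ncsub /ncopp /ncmul /ncone /= !ncoefE !big_cons !big_nil /=.
ring.
Qed.

End AnRelations.

Definition coordn (k : fieldType) (r : nat) (lam : pt k r) (j i : nat) : k :=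
  if insub i is Some o then lam j o else 0.

Lemma coordnE (k : fieldType) r (lam : pt k r) j (o : 'I_r) : coordn lam j o = lam j o.
Proof. by rewrite /coordn valK. Qed.

Lemma coordn_out (k : fieldType) r (lam : pt k r) j i : (r <= i)%N -> coordn lam j i = 0.
Proof. by move=> ri; rewrite /coordn insubN // -leqNgt. Qed.

Section PointEquations.
Variables (k : fieldType) (n d : nat) (lam : pt k n.-1).
Hypothesis lamP : Pd (@An_rel k n) d lam.
Local Notation L := (coordn lam).

Lemma Pd_sq j i : (j + 2 <= d)%N -> L j.+1 i * L j i = 0.
Proof.
move=> jd; case: (ltnP i n.-1) => [i_lt|i_ge]; last by rewrite coordn_out ?mul0r.
have -> : i = Ordinal i_lt by [].
have hom : homog 2 [:: (1 : k, [:: Ordinal i_lt; Ordinal i_lt])].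
  by move=> cw; rewrite inE => /eqP ->.
have := lamP.2 2 j _ hom (@An_rel_sq k n _) jd.
by rewrite !coordnE big_seq1 /= addn0 addn1 mul1r mulr1.
Qed.

Lemma Pd_comm j a b : (j + 2 <= d)%N -> (a.+2 <= b)%N ->
  L j.+1 a * L j b = L j.+1 b * L j a.
Proof.
move=> jd ab; case: (ltnP b n.-1) => [b_lt|b_ge]; last first.
  by rewrite !(coordn_out _ _ b_ge) mulr0 mul0r.
have a_lt : (a < n.-1)%N by lia.
have -> : a = Ordinal a_lt by []; have -> : b = Ordinal b_lt by [].
have hom : homog 2 [:: (1 : k, [:: Ordinal a_lt; Ordinal b_lt]);
                      (-1, [:: Ordinal b_lt; Ordinal a_lt])].
  by move=> cw; rewrite !inE => /orP[] /eqP ->.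
have := lamP.2 2 j _ hom (@An_rel_comm k n (Ordinal a_lt) (Ordinal b_lt) ab) jd.
rewrite !coordnE !big_cons big_nil /= addn0 addn1 => /eqP.
by rewrite addr0 mul1r mulN1r !mulr1 subr_eq0 => /eqP.
Qed.

Lemma Pd_braid j i : (j + 3 <= d)%N ->
  L j.+2 i * L j.+1 i.+1 * L j i = L j.+2 i.+1 * L j.+1 i * L j i.+1.
Proof.
move=> jd; case: (ltnP i.+1 n.-1) => [i1_lt|i1_ge]; last first.
  by rewrite !(coordn_out _ _ i1_ge) ?mulr0 ?mul0r.
have i_lt : (i < n.-1)%N by lia.
pose o := Ordinal i_lt; pose o1 := Ordinal i1_lt.
have -> : i.+1 = o1 by []; have -> : i = o by [].
have hom : homog 3 [:: (1 : k, [:: o; o1; o]); (-1, [:: o1; o; o1])].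
  by move=> cw; rewrite !inE => /orP[] /eqP ->.
have := lamP.2 3 j _ hom (@An_rel_braid k n o o1 erefl) jd.
rewrite !coordnE !big_cons big_nil /= addn0 addn1 addn2 => /eqP.
by rewrite addr0 mul1r mulN1r !mulr1 subr_eq0 -!mulrA => /eqP.
Qed.

Lemma Pd_next_zero j x : (j + 2 <= d)%N -> L j x != 0 -> L j.+1 x = 0.
Proof. by move=> jd x_nz; apply/eqP; rewrite -(mulIr_eq0 _ (mulIf x_nz)) Pd_sq. Qed.

Lemma Pd_adjacent j x y : (j + 2 <= d)%N -> L j x != 0 -> L j.+1 y != 0 ->
  y = x.+1 \/ x = y.+1.
Proof.
move=> jd x_nz y_nz; have Ljx := Pd_next_zero jd x_nz.
case: (ltngtP x y) => [xy|yx|xy]; last by move: y_nz; rewrite -xy Ljx eqxx.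
- case: (eqVneq y x.+1) => [|/eqP yx1]; [by left | exfalso].
  have /esym/eqP := Pd_comm jd (ltac:(lia) : (x.+2 <= y)%N).
  by rewrite Ljx mul0r mulf_eq0 (negbTE x_nz) (negbTE y_nz).
- case: (eqVneq x y.+1) => [|/eqP xy1]; [by right | exfalso].
  have /eqP := Pd_comm jd (ltac:(lia) : (y.+2 <= x)%N).
  by rewrite Ljx mul0r mulf_eq0 (negbTE x_nz) (negbTE y_nz).
Qed.

Lemma Pd_monotone j x y z : (j + 3 <= d)%N ->
  L j x != 0 -> L j.+1 y != 0 -> L j.+2 z != 0 ->
  (y = x.+1 /\ z = y.+1) \/ (x = y.+1 /\ y = z.+1).
Proof.
move=> jd x_nz y_nz z_nz.
have jd2 : (j + 2 <= d)%N by lia.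
have Ljx := Pd_next_zero jd2 x_nz.
have xyz_nz := mulf_neq0 (mulf_neq0 z_nz y_nz) x_nz.
have [yx|xy] := Pd_adjacent jd2 x_nz y_nz;
  have [zy|yz] := Pd_adjacent (ltac:(lia) : (j.+1 + 2 <= d)%N) y_nz z_nz.
- by left.
- have zx : z = x by lia.
  by move: xyz_nz; rewrite yx zx Pd_braid // Ljx mulr0 mul0r eqxx.
- have zx : z = x by lia.
  by move: xyz_nz; rewrite zx xy -Pd_braid // -xy Ljx mulr0 mul0r eqxx.
- by right.
Qed.

End PointEquations.

Section ChainPoints.
Variables (k : fieldType) (r : nat).

Definition unitv (c : nat) : 'I_r -> k := fun i => if val i == c then 1 else 0.

Definition chain_pt (f : nat -> nat) : pt k r := fun j => unitv (f j).

Lemma unitv_nz c i : (unitv c i != 0) = (val i == c).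
Proof. by rewrite /unitv; case: (val i =P c); rewrite ?oner_eq0 ?eqxx. Qed.

Lemma coordn_neq0 (lam : pt k r) j x :
  coordn lam j x != 0 -> exists2 i : 'I_r, val i = x & lam j i != 0.
Proof. by rewrite /coordn; case: insubP => [i _ <- ?|_]; [exists i | rewrite eqxx]. Qed.

Lemma unitv_neq0 c : (c < r)%N -> exists i, unitv c i != 0.
Proof. by move=> cr; exists (Ordinal cr); rewrite unitv_nz. Qed.

Lemma unitv_lin_indep c : (0 < c)%N -> (c.+1 < r)%N -> lin_indep (unitv c.-1) (unitv c.+1).
Proof.
move=> c0 cr s t /[dup] /(_ (Ordinal (ltac:(lia) : (c.-1 < r)%N))).
move=> + /(_ (Ordinal cr)); rewrite /unitv /= !eqxx !ifN_eq; try by apply/eqP; lia.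
by rewrite !mulr0 !mulr1 addr0 add0r => -> ->.
Qed.

Lemma unitv_comb_neq0 c (s t : k) : (0 < c)%N -> (c.+1 < r)%N -> s != 0 \/ t != 0 ->
  exists i, s * unitv c.-1 i + t * unitv c.+1 i != 0.
Proof.
move=> c0 cr [s_nz|t_nz].
  exists (Ordinal (ltac:(lia) : (c.-1 < r)%N)).
  by rewrite /unitv /= eqxx ifN_eq ?mulr1 ?mulr0 ?addr0 //; apply/eqP; lia.
exists (Ordinal cr); rewrite /unitv /= eqxx ifN_eq ?mulr1 ?mulr0 ?add0r //; apply/eqP; lia.
Qed.

Lemma unitv_scale (u : 'I_r -> k) c : (exists i, u i != 0) ->
  (forall i, u i != 0 -> val i = c) -> exists c0, c0 != 0 /\ forall i, u i = c0 * unitv c i.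
Proof.
move=> [i0 ui0] u_c; exists (u i0); split=> // i; rewrite /unitv.
case: eqP => [ic|/eqP ic]; first by rewrite mulr1; congr u; apply: val_inj; rewrite /= ic u_c.
by rewrite mulr0; apply: contraNeq ic => /u_c ->.
Qed.

Lemma pequiv_chain_pt d f (lam : pt k r) : nonzero_pt d lam ->
  (forall j i, (j < d)%N -> lam j i != 0 -> val i = f j) -> pequiv d (chain_pt f) lam.
Proof.
by move=> lam_nz lam_f j jd; apply: unitv_scale; [apply: lam_nz | move=> i; apply: lam_f].
Qed.

Lemma pequiv_nz d (lam mu : pt k r) j i : pequiv d lam mu -> (j < d)%N ->
  (mu j i != 0) = (lam j i != 0).
Proof.
by move=> lam_mu jd; have [c [c_nz ->]] := lam_mu j jd; rewrite mulf_eq0 (negbTE c_nz).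
Qed.

Lemma evalw_chain_pt f s w :
  evalw (chain_pt f) s w = if map val w == rev (map f (iota s (size w))) then 1 else 0.
Proof.
elim: w => [|a w IHw] //.
rewrite [LHS]/= IHw [size (a :: w)]/= -addn1 iotaD map_cat rev_cat /= eqseq_cons.
by rewrite /chain_pt /unitv; case: eqP; case: eqP; rewrite ?mulr1 ?mulr0.
Qed.

End ChainPoints.

Arguments unitv {k r}.
Arguments chain_pt {k r}.

Section Classification.
Variables (k : fieldType) (n d : nat) (lam : pt k n.-1).
Hypotheses (lamP : Pd (@An_rel k n) d lam) (d3 : (3 <= d)%N).
Local Notation L := (coordn lam).

Lemma Pd_support_nonempty j : (j < d)%N -> exists x, L j x != 0.
Proof. by move=> jd; have [i ?] := lamP.1 j jd; exists (val i); rewrite coordnE. Qed.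

(* x = x0 + j (x1 - x0), stated without subtraction *)
Lemma Pd_support_progression x0 x1 : L 0 x0 != 0 -> L 1 x1 != 0 ->
  forall j x, (j < d)%N -> L j x != 0 -> (x + j * x0 = x0 + j * x1)%N.
Proof.
move=> x0_nz x1_nz.
suff two_levels j : (j.+1 < d)%N ->
    (forall x, L j x != 0 -> (x + j * x0 = x0 + j * x1)%N) /\
    (forall x, L j.+1 x != 0 -> (x + j.+1 * x0 = x0 + j.+1 * x1)%N).
  by move=> [|j] x jd; [apply: (two_levels 0%N _).1 | apply: (two_levels j _).2]; lia.
elim: j => [|j IHj] jd.
  have [z z_nz] := Pd_support_nonempty (ltac:(lia) : (2 < d)%N).
  have := Pd_monotone lamP (ltac:(lia) : (0 + 3 <= d)%N) x0_nz x1_nz z_nz.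
  split=> x x_nz.
    by have := Pd_monotone lamP (ltac:(lia) : (0 + 3 <= d)%N) x_nz x1_nz z_nz; lia.
  by have := Pd_monotone lamP (ltac:(lia) : (0 + 3 <= d)%N) x0_nz x_nz z_nz; lia.
have [IHj0 IHj1] := IHj (ltnW jd); split=> // x x_nz.
have [u u_nz] := Pd_support_nonempty (ltac:(lia) : (j < d)%N).
have [v v_nz] := Pd_support_nonempty (ltac:(lia) : (j.+1 < d)%N).
have := IHj0 u u_nz; have := IHj1 v v_nz.
by have := Pd_monotone lamP (ltac:(lia) : (j + 3 <= d)%N) u_nz v_nz x_nz; lia.
Qed.

Lemma Pd_chain :
  (exists a, (a + d <= n.-1)%N /\ pequiv d (chain_pt (addn a)) lam) \/
  (exists b, (d <= b.+1)%N /\ (b < n.-1)%N /\ pequiv d (chain_pt (subn b)) lam).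
Proof.
have [x0 x0_nz] := Pd_support_nonempty (ltac:(lia) : (0 < d)%N).
have [x1 x1_nz] := Pd_support_nonempty (ltac:(lia) : (1 < d)%N).
have supp j i : (j < d)%N -> lam j i != 0 -> (val i + j * x0 = x0 + j * x1)%N.
  by rewrite -coordnE; apply: Pd_support_progression.
have x0_lt : (x0 < n.-1)%N.
  by rewrite ltnNge; apply: contra x0_nz => /(coordn_out lam 0) ->.
have [i_last last_nz] := lamP.1 d.-1 (ltac:(lia) : (d.-1 < d)%N).
have last_pos := supp _ _ (ltac:(lia) : (d.-1 < d)%N) last_nz.
have last_lt : (val i_last < n.-1)%N := ltn_ord i_last.
have [x1E|x0E] := Pd_adjacent lamP (ltac:(lia) : (0 + 2 <= d)%N) x0_nz x1_nz.
- left; exists x0; split; first by lia.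
  by apply: pequiv_chain_pt lamP.1 _ => j i jd /(supp j i jd); rewrite x1E; lia.
- right; exists x0; split; [lia | split; [lia | ]].
  by apply: pequiv_chain_pt lamP.1 _ => j i jd /(supp j i jd); rewrite x0E; lia.
Qed.

End Classification.

Section SubsetAction.
Local Open Scope fset_scope.

Definition movable (i j : nat) (S : {fset nat}) : bool :=
  [&& i \notin S, j \notin S & all (fun m => m \in S) (iota i.+1 (j - i.+1))].

Lemma movableP i j S :
  reflect [/\ i \notin S, j \notin S & forall m, (i < m < j)%N -> m \in S] (movable i j S).
Proof.
apply: (iffP and3P) => [[iS jS /allP between] | [iS jS between]]; split=> //.
  by move=> m im; apply: between; rewrite mem_iota; lia.
by apply/allP => m; rewrite mem_iota => im; apply: between; lia.
Qed.

Lemma movable_insert_src i j S : movable i j (i |` S) = false.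
Proof. by apply/movableP => -[]; rewrite !inE eqxx. Qed.

Lemma movable_insert_tgt i j S : movable i j (j |` S) = false.
Proof. by apply/movableP => -[_]; rewrite !inE eqxx. Qed.

Lemma movable_comm_imp i j a b S : (i < j)%N -> (a < b)%N ->
  [&& i != a, i != b, j != a & j != b] ->
  movable a b S -> movable i j (a |` S) -> movable i j S && movable a b (i |` S).
Proof.
move=> ij ab /and4P[ia ib ja jb] /movableP[aS bS abS] /movableP[].
rewrite !inE !negb_or => /andP[_ iS] /andP[_ jS] ijS.
apply/andP; split; apply/movableP; split=> //.
- move=> m im; have := ijS m im; rewrite !inE => /orP[/eqP ma|] //.
  (* a lies strictly between i and j, so either b or j contradicts movability *)
  case: (ltngtP b j) => [bj|jb'|bj]; last by move: jb; rewrite bj eqxx.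
  + by have := ijS b (ltac:(lia)); rewrite !inE (negbTE bS) orbF => /eqP; lia.
  + by have := abS j (ltac:(lia)); rewrite (negbTE jS).
- by rewrite !inE negb_or eq_sym ia.
- by rewrite !inE negb_or eq_sym ib.
- by move=> m /abS mS; rewrite !inE mS orbT.
Qed.

Lemma movable_comm i j a b S : (i < j)%N -> (a < b)%N ->
  [&& i != a, i != b, j != a & j != b] ->
  movable a b S && movable i j (a |` S) = movable i j S && movable a b (i |` S).
Proof.
move=> ij ab disj; apply/idP/idP => /andP[]; first exact: movable_comm_imp.
apply: movable_comm_imp => //; case/and4P: disj => ia ib ja jb.
by apply/and4P; split; rewrite eq_sym.
Qed.

Lemma movable_tri_dead i j l S : (i < j < l)%N -> movable i l S && movable j l (i |` S) = false.
Proof.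
move=> ijl; apply/negbTE/andP => -[/movableP[_ _ ilS] /movableP[]].
by rewrite inE ilS ?orbT //; lia.
Qed.

Lemma movable_tri i j l S : (i < j < l)%N ->
  movable i j S && movable j l (i |` S) = movable j l S && movable i l (j |` S).
Proof.
move=> ijl; apply/idP/idP.
- case/andP=> /movableP[iS jS ijS] /movableP[_].
  rewrite !inE negb_or => /andP[_ lS] jlS.
  have jlS' m : (j < m < l)%N -> m \in S.
    by move=> jml; have := jlS m jml; rewrite !inE => /orP[/eqP|] //; lia.
  apply/andP; split; apply/movableP; split=> //.
  + by rewrite !inE negb_or iS andbT; apply/eqP; lia.
  + by rewrite !inE negb_or lS andbT; apply/eqP; lia.
  + move=> m iml; rewrite !inE; case: (ltngtP m j) => [mj|jm|->]; rewrite ?eqxx //.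
      by rewrite ijS ?orbT //; lia.
    by rewrite jlS' ?orbT //; lia.
- case/andP=> /movableP[jS lS jlS] /movableP[].
  rewrite !inE !negb_or => /andP[_ iS] _ ilS.
  apply/andP; split; apply/movableP; split=> //.
  + by move=> m imj; have := ilS m (ltac:(lia)); rewrite !inE => /orP[/eqP|] //; lia.
  + by rewrite !inE negb_or jS andbT; apply/eqP; lia.
  + by rewrite !inE negb_or lS andbT; apply/eqP; lia.
  + by move=> m /jlS mS; rewrite !inE mS orbT.
Qed.

End SubsetAction.

Section WordAction.
Variable n : nat.
Local Open Scope fset_scope.

(* The monomial representation of E_n on finite sets of vertices: x_{ij} adds i to S when
   i and j are not in S but every vertex strictly between them is, and kills S otherwise. *)
Definition xact (g : FKgen n) (S : {fset nat}) : option {fset nat} :=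
  if movable (val g).1 (val g).2 S then Some ((val g).1 |` S) else None.

Definition wact (w : seq (FKgen n)) (S : {fset nat}) : option {fset nat} :=
  foldr (fun g => obind (xact g)) (Some S) w.

Lemma wact_cat U V S : wact (U ++ V) S = obind (wact U) (wact V S).
Proof. by elim: U => [|g U IHU] /=; [case: (wact V S) | rewrite IHU; case: (wact V S)]. Qed.

Lemma xact2 g h S : obind (xact g) (xact h S) =
  if movable (val h).1 (val h).2 S && movable (val g).1 (val g).2 ((val h).1 |` S)
  then Some ((val g).1 |` ((val h).1 |` S)) else None.
Proof. by rewrite /xact; case: movable. Qed.

Lemma FKrel_wact (k : fieldType) (r : ncpoly k (FKgen n)) (rv : bool) S
    (F : option {fset nat} -> k) : FKrel r -> F None = 0 ->
  \sum_(cr <- r) cr.1 * F (wact (if rv then rev cr.2 else cr.2) S) = 0.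
Proof.
case/FKrelP=> [g|g h i j a b gv hv ij ab disj|g1 g2 g3 i j l v1 v2 v3 ijl|
               g1 g2 g3 i j l v1 v2 v3 ijl] -> F0;
  rewrite !big_cons big_nil; case: rv; rewrite /= !xact2.
- by rewrite movable_insert_src andbF F0; ring.
- by rewrite movable_insert_src andbF F0; ring.
- by rewrite gv hv /= (movable_comm _ ij ab disj) fsetUCA; ring.
- by rewrite gv hv /= (movable_comm _ ij ab disj) fsetUCA; ring.
- by rewrite v1 v2 v3 /= movable_insert_src andbF (movable_tri _ ijl) fsetUCA F0; ring.
- rewrite v1 v2 v3 /= movable_insert_tgt movable_insert_src !andbF.
  by rewrite (movable_tri_dead _ ijl) F0; ring.
- rewrite v1 v2 v3 /= movable_insert_tgt movable_insert_src !andbF.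
  by rewrite (movable_tri_dead _ ijl) F0; ring.
- by rewrite v1 v2 v3 /= movable_insert_src andbF (movable_tri _ ijl) fsetUCA F0; ring.
Qed.

End WordAction.

Lemma rev_map_subn_iota b s t : (s + t <= b.+1)%N ->
  rev (map (subn b) (iota s t)) = iota (b.+1 - (s + t)) t.
Proof.
elim: t => [|t IHt] st //.
rewrite -[t.+1]addn1 iotaD map_cat rev_cat /= IHt; last by lia.
by rewrite addn1 /=; congr (_ :: iota _ _); lia.
Qed.

Section SegmentFunctionals.
Variables (k : fieldType) (n : nat).
Local Open Scope fset_scope.

Definition segment (c t : nat) : {fset nat} := [fset x | x in iota c t].

Lemma in_segment c t x : (x \in segment c t) = (c <= x < c + t)%N.
Proof. by rewrite /segment !inE mem_iota. Qed.

(* reading words backwards is harmless: reversal permutes the Fomin-Kirillov relations *)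
Definition wact_coef (T : {fset nat}) (rv : bool) (w : seq (FKgen n)) : k :=
  if wact (if rv then rev w else w) fset0 == Some T then 1 else 0.

Lemma wact_coef_annihilates T rv : annihilates (@FKrel k n) (wact_coef T rv).
Proof.
move=> r rR U V; pose F o : k := if o == Some T then 1 else 0.
rewrite /wact_coef -/(F _); under eq_bigr do rewrite -/(F _).
case: rv.
- under eq_bigr do rewrite !rev_cat !wact_cat.
  case: (wact (rev U) fset0) => [S|] /=; last by rewrite big1 // => cr _; rewrite /F /= mulr0.
  under eq_bigr do rewrite wact_cat.
  by have := FKrel_wact true S (F := F \o obind (wact (rev V))) rR erefl.
- under eq_bigr do rewrite !wact_cat.
  case: (wact V fset0) => [S|] /=; last by rewrite big1 // => cr _; rewrite /F /= mulr0.
  by have := FKrel_wact false S (F := F \o obind (wact U)) rR erefl.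
Qed.

Lemma wact_segment (w : seq 'I_n.-1) c :
  wact (map ygen w) fset0 = Some (segment c (size w)) <-> map val w = rev (iota c (size w)).
Proof.
elim: w c => [|a w IHw] c.
  by split=> // _; congr Some; apply/fsetP => x; rewrite in_segment !inE /= addn0; lia.
have -> : rev (iota c (size (a :: w))) = (c + size w)%N :: rev (iota c (size w)).
  by rewrite [size _]/= -addn1 iotaD rev_cat.
rewrite /= /xact /=; split.
- case E: (wact (map ygen w) fset0) => [S|] //=.
  case: ifP => // /movableP[aS a1S _] [aSE].
  have memS x : x \in S = (x != val a) && (c <= x < c + (size w).+1)%N.
    have := congr1 (fun X => x \in X) aSE; rewrite in_segment !inE => <-.
    by case: eqP => // ->; rewrite (negbTE aS).
  have aE : val a = (c + size w)%N.
    have := memS (val a).+1; rewrite (negbTE a1S).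
    by have := congr1 (fun X => val a \in X) aSE; rewrite in_segment !inE eqxx /=; lia.
  have SE : S = segment c (size w) by apply/fsetP => x; rewrite memS in_segment; lia.
  by rewrite aE; congr (_ :: _); apply/IHw; rewrite E SE.
- case=> aE /IHw ->; have {}aE : (a : nat) = (c + size w)%N := aE.
  rewrite /=; have -> : movable a a.+1 (segment c (size w)).
    by apply/movableP; split=> [||m]; rewrite ?in_segment; lia.
  by congr Some; apply/fsetP => x; rewrite !(inE, in_segment); lia.
Qed.

Lemma Pd_chain_up a d : (a + d <= n.-1)%N -> Pd (@An_rel k n) d (chain_pt (addn a)).
Proof.
move=> fit; apply: Pd_of_annihilators => [j jd|s t st].
  by exists (Ordinal (ltac:(lia) : (a + j < n.-1)%N)); rewrite /chain_pt unitv_nz /=.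
exists (wact_coef (segment (a + s) t) false); split=> [|w <-].
  exact: wact_coef_annihilates.
rewrite evalw_chain_pt -iotaDl /wact_coef.
by congr (if _ then _ else _); apply/eqP/eqP => /wact_segment.
Qed.

Lemma Pd_chain_down b d : (d <= b.+1)%N -> (b < n.-1)%N ->
  Pd (@An_rel k n) d (chain_pt (subn b)).
Proof.
move=> db bn; apply: Pd_of_annihilators => [j jd|s t st].
  by exists (Ordinal (ltac:(lia) : (b - j < n.-1)%N)); rewrite /chain_pt unitv_nz /=.
exists (wact_coef (segment (b.+1 - (s + t)) t) true); split=> [|w wt].
  exact: wact_coef_annihilates.
subst t; rewrite evalw_chain_pt rev_map_subn_iota; last by lia.
rewrite /wact_coef /= -map_rev -[map _ w]/(map val w) -(size_rev w).
congr (if _ then _ else _); apply/eqP/eqP.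
  by move/wact_segment; rewrite map_rev => /(congr1 rev); rewrite !revK.
by move=> wE; apply/wact_segment; rewrite map_rev wE.
Qed.

End SegmentFunctionals.

Section ChainCount.
Variables (k : fieldType) (n : nat).

(* chains start at 0, ..., n-d-1 going up, then at d-1, ..., n-2 going down *)
Definition chain_start (d a : nat) : nat -> nat :=
  if (a < n - d)%N then addn a else subn (a - (n - d) + d.-1).

Lemma Pd_chain_start d a : (2 <= d <= n - 1)%N -> (a < 2 * n - 2 * d)%N ->
  Pd (@An_rel k n) d (chain_pt (chain_start d a)).
Proof.
rewrite /chain_start => d_range a_lt; case: ifP => a_up.
  by apply: Pd_chain_up; lia.
by apply: Pd_chain_down; lia.
Qed.

Lemma chain_start_inj d a b : (2 <= d <= n - 1)%N ->
  (a < 2 * n - 2 * d)%N -> (b < 2 * n - 2 * d)%N ->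
  pequiv d (chain_pt (chain_start d a) : pt k n.-1) (chain_pt (chain_start d b)) -> a = b.
Proof.
move=> d_range a_lt b_lt ab.
have same j : (j <= 1)%N -> chain_start d b j = chain_start d a j.
  move=> j1; have lt : (chain_start d a j < n.-1)%N by rewrite /chain_start; case: ifP; lia.
  have := pequiv_nz (Ordinal lt) ab (ltac:(lia) : (j < d)%N).
  by rewrite /chain_pt !unitv_nz /= eqxx => /eqP.
by move: (same 0%N isT) (same 1%N isT); rewrite /chain_start; do 2 case: ifP; lia.
Qed.

Lemma has_npoints_chains d : (2 <= d <= n - 1)%N ->
  (forall lam, Pd_An k n d lam ->
     exists a : 'I_(2 * n - 2 * d), pequiv d (chain_pt (chain_start d a)) lam) ->
  has_npoints d (Pd_An k n d) (2 * n - 2 * d).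
Proof.
move=> d_range chains; exists (fun a => chain_pt (chain_start d a)).
split=> [a|]; first exact: Pd_chain_start.
by split=> // a b ab; apply: val_inj; apply: chain_start_inj ab.
Qed.

Lemma Pd_An_npoints d : (3 <= d <= n - 1)%N -> has_npoints d (Pd_An k n d) (2 * n - 2 * d).
Proof.
move=> d_range; apply: has_npoints_chains => [|lam lamP]; first by lia.
have [[a [fit lam_a]]|[b [db [bn lam_b]]]] := Pd_chain lamP (ltac:(lia) : (3 <= d)%N).
  exists (Ordinal (ltac:(lia) : (a < 2 * n - 2 * d)%N)).
  by rewrite /chain_start /=; case: ifP => //; lia.
exists (Ordinal (ltac:(lia) : (b - d.-1 + (n - d) < 2 * n - 2 * d)%N)).
rewrite /chain_start /=; case: ifP; first by lia.
by rewrite (_ : b - d.-1 + (n - d) - (n - d) + d.-1 = b)%N //; lia.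
Qed.

Lemma Pd_An_empty d : (3 <= d)%N -> (n <= d)%N -> has_npoints d (Pd_An k n d) 0.
Proof.
move=> d3 nd; exists (fun _ _ _ => 0); split=> [[]|]; split=> [[]|lam lamP] //.
by have [[a []]|[b [? []]]] := Pd_chain lamP d3; lia.
Qed.

End ChainCount.

Section DegreeTwoFunctional.
Variables (k : fieldType) (n : nat) (lam : pt k n.-1).
Local Notation L := (coordn lam).
Hypothesis sq0 : forall i, L 1 i * L 0 i = 0.
Hypothesis comm0 : forall a b, (a.+2 <= b)%N -> L 1 a * L 0 b = L 1 b * L 0 a.

(* value on x_p x_q; off the words y_a y_b it is forced by the triangle relations *)
Definition psi2_gens (p q : nat * nat) : k :=
  if (p.2 == p.1.+1) && (q.2 == q.1.+1) then L 1 p.1 * L 0 q.1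
  else if (p.2 == q.2) && (q.1 < p.1)%N then
    (if (p.1 == q.1.+1) && (p.2 == p.1.+1) then L 1 q.1 * L 0 p.1 else 0)
  else if (p.2 == q.2) && (p.1 < q.1)%N then
    (if (q.1 == p.1.+1) && (q.2 == q.1.+1) then L 1 q.1 * L 0 p.1 else 0)
  else 0.

Definition psi2 (w : seq (FKgen n)) : k :=
  if w is [:: g; h] then psi2_gens (val g) (val h) else 0.

Lemma psi2_FKrel (r : ncpoly k (FKgen n)) : FKrel r -> \sum_(cr <- r) cr.1 * psi2 cr.2 = 0.
Proof.
case/FKrelP=> [g|g h i j a b gv hv ij ab disj|g1 g2 g3 i j l v1 v2 v3 ijl|
               g1 g2 g3 i j l v1 v2 v3 ijl] ->; rewrite !big_cons big_nil /psi2 /psi2_gens /=.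
- by rewrite eqxx ltnn !andbF; case: ifP => [/andP[/eqP -> _]|_]; rewrite ?sq0; ring.
- rewrite gv hv /=; case/and4P: disj => ia ib ja jb.
  rewrite (negbTE jb) [b == j]eq_sym (negbTE jb) /=.
  case: (eqVneq j i.+1) => [ji|_]; case: (eqVneq b a.+1) => [ba|_] /=; try ring.
  subst j b; case: (ltngtP i a) => [ia'|ai|ai]; last by rewrite ai eqxx in ia.
    by rewrite comm0; [ring | apply: contraNT ja; lia].
  by rewrite (comm0 (a := a)); [ring | apply: contraNT ib; lia].
- rewrite v1 v2 v3 /=.
  have [-> -> ->] : [/\ (j == l) = false, (l == i.+1) = false & (l == j) = false].
    by split; apply/eqP; lia.
  rewrite (_ : (i < j)%N) /= ?eqxx ?andbF /=; last by lia.
  by case: ifP => _; ring.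
- rewrite v1 v2 v3 /=.
  have [-> -> -> ->] : [/\ (j == l) = false, (l == i.+1) = false, (l == j) = false
                        & (j < i)%N = false] by split; apply/eqP; lia.
  rewrite (_ : (i < j)%N) /= ?eqxx ?andbF /=; last by lia.
  by case: (j == i.+1); case: (l == j.+1); rewrite /=; ring.
Qed.

End DegreeTwoFunctional.

Lemma annihilates_low_degree (k : fieldType) n (psi : seq (FKgen n) -> k) :
  (forall w, (2 < size w)%N -> psi w = 0) ->
  (forall r, FKrel r -> \sum_(cr <- r) cr.1 * psi cr.2 = 0) -> annihilates (@FKrel k n) psi.
Proof.
move=> psi_high psi_rel r rR [|u U] [|v V].
  by under eq_bigr do rewrite cats0; apply: psi_rel.
all: rewrite big1_seq // => cr /andP[_ /(FKrel_size rR) cr2].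
all: by rewrite psi_high ?mulr0 // !size_cat /= cr2 ?size_cat /=; lia.
Qed.

Section DegreeTwo.
Variables (k : fieldType) (n : nat).

Definition adjacent_supports (lam : pt k n.-1) :=
  forall i i' : 'I_n.-1, lam 0%N i != 0 -> lam 1%N i' != 0 ->
    i' = i.+1 :> nat \/ i = i'.+1 :> nat.

Lemma Pd2_adjacent lam : Pd (@An_rel k n) 2 lam -> adjacent_supports lam.
Proof. by move=> lamP i i' i_nz i'_nz; apply: (Pd_adjacent lamP (j := 0)); rewrite ?coordnE. Qed.

Lemma adjacent_Pd2 lam : nonzero_pt 2 lam -> adjacent_supports lam -> Pd (@An_rel k n) 2 lam.
Proof.
move=> lam_nz adj; pose L := coordn lam.
have L_zero x y : ~ (y = x.+1 \/ x = y.+1) -> L 1 y * L 0 x = 0.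
  move=> not_adj; apply/eqP; rewrite mulf_eq0; apply: contraT; rewrite negb_or.
  case/andP=> /coordn_neq0[i' yE i'_nz] /coordn_neq0[i xE i_nz]; subst x y.
  by case: not_adj; apply: adj.
have sq0 i : L 1 i * L 0 i = 0 by apply: L_zero; lia.
have comm0 a b : (a.+2 <= b)%N -> L 1 a * L 0 b = L 1 b * L 0 a.
  by move=> ab; rewrite !L_zero //; lia.
apply: Pd_of_annihilators => // s [|[|[|t]]] st; last by lia.
- exists (fun w : seq (FKgen n) => if w is [::] then 1 else 0); split=> [|[]] //.
  apply: annihilates_low_degree => [[]|r rR] //.
  by rewrite big1_seq // => cr /andP[_ /(FKrel_size rR)]; case: cr.2 => //; rewrite mulr0.
- exists (fun w : seq (FKgen n) =>
    if w is [:: g] then (if (val g).2 == (val g).1.+1 then L s (val g).1 else 0) else 0).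
  split=> [|[|a []]] //=; last by rewrite eqxx /L coordnE addn0 mulr1.
  apply: annihilates_low_degree => [[|? [|? []]]|r rR] //.
  rewrite big1_seq // => cr /andP[_ /(FKrel_size rR)].
  by case: cr.2 => [|? [|? []]] //; rewrite mulr0.
- exists (psi2 lam); split=> [|[|a [|b []]]] //=.
    by apply: annihilates_low_degree => [[|? [|? [|? ?]]]|r rR] //; apply: psi2_FKrel.
  have -> : s = 0%N by lia.
  by rewrite /psi2_gens /= !eqxx /= => _; rewrite !coordnE mulr1.
Qed.

End DegreeTwo.

Lemma coordn_unitv_pair (k : fieldType) r (lam : pt k r) j c : (1 <= c)%N ->
  (forall i, lam j i != 0 -> (val i).+1 = c \/ val i = c.+1) ->
  forall i, lam j i = coordn lam j c.-1 * unitv c.-1 i + coordn lam j c.+1 * unitv c.+1 i.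
Proof.
move=> c1 supp i; rewrite /unitv.
case: (val i =P c.-1) => [ic|ne1].
  by rewrite ifN_eq; [rewrite -ic coordnE mulr1 mulr0 addr0 | apply/eqP; lia].
case: (val i =P c.+1) => [<-|ne2]; first by rewrite coordnE mulr0 mulr1 add0r.
by rewrite !mulr0 addr0; apply/eqP; apply: contraT => /supp; lia.
Qed.

Section Lines.
Variables (k : fieldType) (n : nat).
Hypothesis n4 : (3 < n)%N.

(* lines a < n - 3 fix the first factor, the others fix the second one *)
Definition line_fixed (a : nat) : nat := if (a < n - 3)%N then 0 else 1.
Definition line_center (a : nat) : nat := (if (a < n - 3)%N then a else a - (n - 3))%N.+1.

Definition lineU (a : nat) : pt k n.-1 := fun j =>
  unitv (if j == line_fixed a then line_center a else (line_center a).-1).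
Definition lineV (a : nat) : pt k n.-1 := fun _ => unitv (line_center a).+1.
Definition lineC (a : nat) : nat -> bool := fun j => j == line_fixed a.

Definition line_supported (a : nat) (lam : pt k n.-1) :=
  forall j i, (j < 2)%N -> lam j i != 0 ->
    if j == line_fixed a then val i = line_center a
    else (val i).+1 = line_center a \/ val i = (line_center a).+1.

Section OneLine.
Variable a : nat.
Hypothesis a_lt : (a < 2 * n - 6)%N.
Local Notation c := (line_center a).

Lemma line_center_range : (1 <= c)%N /\ (c.+1 < n.-1)%N.
Proof. by rewrite /line_center; case: ifP; lia. Qed.

Lemma line_good : good_line 2 (lineU a) (lineV a) (lineC a).
Proof.
have [c1 cn] := line_center_range.
split; last by exists (1 - line_fixed a)%N; rewrite /lineC /line_fixed; case: ifP.
move=> j _; rewrite /lineC /lineU /lineV; case: eqP => _; last exact: unitv_lin_indep.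
by apply: unitv_neq0; lia.
Qed.

Definition line_pt (s t : k) : pt k n.-1 :=
  fun j i => if lineC a j then lineU a j i else s * lineU a j i + t * lineV a j i.

Lemma line_pt_nz s t : s != 0 \/ t != 0 -> nonzero_pt 2 (line_pt s t).
Proof.
have [c1 cn] := line_center_range.
move=> st j _; rewrite /line_pt /lineC /lineU /lineV; case: eqP => _.
  by apply: unitv_neq0; lia.
exact: unitv_comb_neq0.
Qed.

Lemma line_pt_supported s t : line_supported a (line_pt s t).
Proof.
move=> j i _; rewrite /line_pt /lineC /lineU /lineV.
case: (j =P line_fixed a) => _; first by rewrite unitv_nz => /eqP.
rewrite /unitv; case: (val i =P c.-1) => [->|_]; first by left; have [] := line_center_range; lia.
by case: (val i =P c.+1) => [|_]; [right | rewrite !mulr0 addr0 eqxx].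
Qed.

Lemma on_lineP lam : on_line 2 (lineU a) (lineV a) (lineC a) lam <->
  nonzero_pt 2 lam /\ line_supported a lam.
Proof.
split=> [[s [t [st lam_st]]]|[lam_nz lam_supp]].
  split=> [j j2|j i j2]; first have [i] := line_pt_nz st j2.
    by exists i; rewrite (pequiv_nz _ lam_st j2).
  by rewrite (pequiv_nz _ lam_st j2); apply: line_pt_supported.
have [c1 _] := line_center_range; pose j' := (1 - line_fixed a)%N.
have j'_supp i : lam j' i != 0 -> (val i).+1 = c \/ val i = c.+1.
  by have := lam_supp j' i; rewrite /j' /line_fixed; case: ifP => _ /=; apply.
exists (coordn lam j' c.-1), (coordn lam j' c.+1); split.
  have [i /[dup] /j'_supp [<-|<-] i_nz] := lam_nz j' (ltac:(lia) : (j' < 2)%N).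
    by left; rewrite /= coordnE.
  by right; rewrite coordnE.
move=> j j2; rewrite /lineC /lineU /lineV; case: (j =P line_fixed a) => [jf|jf].
  apply: unitv_scale; first exact: lam_nz.
  by move=> i /(lam_supp j i j2); rewrite jf eqxx.
have -> : j = j' by move: jf; rewrite /j' /line_fixed; case: ifP; lia.
by exists 1; split; [exact: oner_neq0 | move=> i; rewrite mul1r; apply: coordn_unitv_pair].
Qed.

Lemma on_line_Pd2 lam : on_line 2 (lineU a) (lineV a) (lineC a) lam -> Pd (@An_rel k n) 2 lam.
Proof.
case/on_lineP=> lam_nz lam_supp; apply: adjacent_Pd2 => // i i'.
move=> /(lam_supp 0%N i isT) + /(lam_supp 1%N i' isT).
by rewrite /line_fixed; case: (a < n - 3)%N => /=; lia.
Qed.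

Lemma line_pt_fixed s t i : line_pt s t (line_fixed a) i = unitv c i.
Proof. by rewrite /line_pt /lineC /lineU eqxx. Qed.

Lemma line_pt_moving s t i :
  line_pt s t (1 - line_fixed a)%N i = s * unitv c.-1 i + t * unitv c.+1 i.
Proof.
rewrite /line_pt /lineC /lineU /lineV.
by have -> : (1 - line_fixed a == line_fixed a)%N = false by rewrite /line_fixed; case: ifP.
Qed.

Lemma on_line_pt : on_line 2 (lineU a) (lineV a) (lineC a) (line_pt 1 1).
Proof.
exists 1, 1; split; first by left; apply: oner_neq0.
by move=> j _; exists 1; split=> [|i]; [exact: oner_neq0 | rewrite [RHS]mul1r].
Qed.

End OneLine.

Lemma on_line_first c lam : (0 < c)%N -> (c.+1 < n.-1)%N -> nonzero_pt 2 lam ->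
  (forall i, lam 0%N i != 0 -> val i = c) ->
  (forall i, lam 1%N i != 0 -> (val i).+1 = c \/ val i = c.+1) ->
  on_line 2 (lineU c.-1) (lineV c.-1) (lineC c.-1) lam.
Proof.
move=> c0 cn lam_nz supp0 supp1; apply/on_lineP; first by lia.
have first : (c.-1 < n - 3)%N by lia.
split=> // -[|[|j]] i // _; rewrite /line_fixed /line_center first prednK //=.
  exact: supp0.
exact: supp1.
Qed.

Lemma on_line_second c lam : (0 < c)%N -> (c.+1 < n.-1)%N -> nonzero_pt 2 lam ->
  (forall i, lam 1%N i != 0 -> val i = c) ->
  (forall i, lam 0%N i != 0 -> (val i).+1 = c \/ val i = c.+1) ->
  on_line 2 (lineU (c.-1 + (n - 3))) (lineV (c.-1 + (n - 3))) (lineC (c.-1 + (n - 3))) lam.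
Proof.
move=> c0 cn lam_nz supp1 supp0; apply/on_lineP; first by lia.
have second : (c.-1 + (n - 3) < n - 3)%N = false by apply/negbTE; rewrite -leqNgt leq_addl.
split=> // -[|[|j]] i // _; rewrite /line_fixed /line_center second addnK prednK //=.
  exact: supp0.
exact: supp1.
Qed.

End Lines.

Arguments line_center : simpl never.
Arguments lineU {k n}.
Arguments lineV {k n}.
Arguments line_pt {k n}.

Section DegreeTwoCount.
Variables (k : fieldType) (n : nat).

Hypothesis n4 : (3 < n)%N.

Lemma Pd2_on_line (lam : pt k n.-1) : Pd (@An_rel k n) 2 lam ->
  exists a : 'I_(2 * n - 6), on_line 2 (lineU a) (lineV a) (lineC n a) lam.
Proof.
move=> lamP; have lam_nz := lamP.1; have adj := Pd2_adjacent lamP.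
suff [a a_lt] : exists2 a, (a < 2 * n - 6)%N & on_line 2 (lineU a) (lineV a) (lineC n a) lam.
  by exists (Ordinal a_lt).
have [i0 i0_nz] := lam_nz 0%N isT; have [i1 i1_nz] := lam_nz 1%N isT.
have i0_lt := ltn_ord i0; have i1_lt := ltn_ord i1.
case: (pickP (fun i : 'I_n.-1 => (lam 0%N i != 0) && (i != i0 :> nat))).
  (* two points in the first support: the second factor is fixed at their midpoint *)
  move=> i0' /andP[i0'_nz /eqP i0'_ne]; have i0'_lt := ltn_ord i0'.
  have mid := adj _ _ i0_nz i1_nz; have mid' := adj _ _ i0'_nz i1_nz.
  exists (i1.-1 + (n - 3))%N; first by lia.
  apply: (@on_line_second k n n4 i1) => //; try lia; move=> i i_nz.
    by have := adj _ _ i0_nz i_nz; have := adj _ _ i0'_nz i_nz; rewrite /=; lia.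
  by have := adj _ _ i_nz i1_nz; rewrite /=; lia.
move=> single; have supp0 (i : 'I_n.-1) : lam 0%N i != 0 -> i = i0 :> nat.
  by move=> i_nz; have := single i; rewrite i_nz /= => /negbFE/eqP.
have supp1 (i : 'I_n.-1) : lam 1%N i != 0 -> i.+1 = i0 :> nat \/ i = i0.+1 :> nat.
  by move=> i_nz; have := adj _ _ i0_nz i_nz; lia.
case: (posnP i0) => [i0_0|i0_pos].
  exists (0 + (n - 3))%N; first by lia.
  apply: (@on_line_second k n n4 1) => //; try lia.
    by move=> i /supp1 /=; lia.
  by move=> i /supp0 /=; lia.
case: (ltnP i0.+1 n.-1) => [i0_mid|i0_last].
  exists i0.-1; first by lia.
  exact: on_line_first.
exists ((n - 3).-1 + (n - 3))%N; first by lia.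
apply: (@on_line_second k n n4 (n - 3)) => //; try lia.
  by move=> i /supp1 /=; have := ltn_ord i; lia.
by move=> i /supp0 /=; lia.
Qed.

Lemma line_inj (a b : nat) : (a < 2 * n - 6)%N -> (b < 2 * n - 6)%N ->
  (forall lam : pt k n.-1, on_line 2 (lineU a) (lineV a) (lineC n a) lam <->
                           on_line 2 (lineU b) (lineV b) (lineC n b) lam) -> a = b.
Proof.
move=> a_lt b_lt same; have [c1 cn] := line_center_range n4 a_lt.
have /same /(on_lineP n4 b_lt) [_ supp] := on_line_pt k n a.
have unitv_at c (i : 'I_n.-1) : i = c :> nat -> unitv c i = 1.
  by move=> ic; rewrite /unitv ifT //; apply/eqP; exact: ic.
have unitv_off c (i : 'I_n.-1) : i != c :> nat -> unitv c i = 0.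
  by move=> ic; rewrite /unitv ifF //; apply/negbTE; exact: ic.
have ord_at m : (m < n.-1)%N -> exists i : 'I_n.-1, i = m :> nat.
  by move=> mn; exists (Ordinal mn).
have [ic icE] := ord_at (line_center n a) (ltac:(lia)).
have [im imE] := ord_at (line_center n a).-1 (ltac:(lia)).
have [ip ipE] := ord_at (line_center n a).+1 cn.
have := supp (line_fixed n a) ic; rewrite line_pt_fixed unitv_at //.
have := supp (1 - line_fixed n a)%N im.
rewrite line_pt_moving (unitv_at _ _ im) // (unitv_off _ _ im); last by apply/eqP; lia.
have := supp (1 - line_fixed n a)%N ip.
rewrite line_pt_moving (unitv_at _ (line_center n a).+1 ip) //.
rewrite (unitv_off _ (line_center n a).-1 ip); last by apply/eqP; lia.
rewrite !mulr1 !mulr0 ?addr0 ?add0r oner_neq0; move: icE imE ipE.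
by rewrite /line_fixed /line_center; case: (ltnP a (n - 3)); case: (ltnP b (n - 3)) => /=; lia.
Qed.

Lemma Pd_An_2_lines : union_of_P1s 2 (Pd_An k n 2) (2 * n - 6).
Proof.
exists (fun a : 'I_(2 * n - 6) => lineU a), (fun a => lineV a), (fun a => lineC n a).
split=> [a|]; first exact: (line_good k n4 (ltn_ord a)).
split=> [a b same|lam]; first by apply: val_inj; apply: line_inj (ltn_ord a) (ltn_ord b) same.
split; first exact: Pd2_on_line.
by case=> a /(on_line_Pd2 n4 (ltn_ord a)).
Qed.

End DegreeTwoCount.

Lemma Pd_A3_2 (k : fieldType) : has_npoints 2 (Pd_An k 3 2) 2.
Proof.
apply: has_npoints_chains => // lam lamP; have adj := Pd2_adjacent lamP.
have [i0 i0_nz] := lamP.1 0%N isT; have [i1 i1_nz] := lamP.1 1%N isT.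
exists (Ordinal (ltn_ord i0 : (i0 < 2 * 3 - 2 * 2)%N)).
apply: pequiv_chain_pt lamP.1 _ => j i j2 i_nz; have := adj _ _ i0_nz i1_nz.
case: j j2 i_nz => [|[|]] // _ i_nz; [have := adj _ _ i_nz i1_nz | have := adj _ _ i0_nz i_nz].
all: by case: i i0 i1 {i_nz i0_nz i1_nz} => [[|[|?]] ?] [[|[|?]] ?] [[|[|?]] ?] //=; lia.
Qed.

Unset Implicit Arguments.
Local Close Scope ring_scope.

Theorem proposition3p2 (k : closedFieldType) (n : nat) (hn : (3 <= n)%N) :
  (forall d : nat, (3 <= d <= n - 1)%N ->
     has_npoints d (Pd_An k n d) (2 * n - 2 * d)) /\
  (forall d : nat, (n <= d)%N -> has_npoints d (Pd_An k n d) 0) /\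
  ((3 < n)%N -> union_of_P1s 2 (Pd_An k n 2) (2 * n - 6)) /\
  (n = 3 -> has_npoints 2 (Pd_An k n 2) 2).
Proof.
split; [|split; [|split]].
- by move=> d; apply: Pd_An_npoints.
- by move=> d nd; apply: Pd_An_empty (leq_trans hn nd) nd.
- exact: Pd_An_2_lines.
- by move=> ->; apply: Pd_A3_2.
Qed.
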